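(* Let $X_1,\ldots,X_q\in\{-1,0,1\}$ be i.i.d. random variables with mean $\mu\ne0$. Then for every $\epsilon$ with $0<\epsilon\le\frac{\min(\Pr(X_i=1),\Pr(X_i=-1))}{2|\mu|}$, $$\Pr\left(\left|\frac1{q|\mu|}\sum_{i=1}^qX_i-\frac{\mu}{|\mu|}\right|\ge\epsilon\right)\le4e^{-\frac{q\epsilon^2|\mu|^2}{12\Pr(X_i\ne0)}}.$$ *)

From mathcomp Require Import all_boot all_order all_algebra.
From mathcomp Require Import all_classical all_reals.
From mathcomp Require Import sequences exp.
Set Implicit Arguments. Unset Strict Implicit. Unset Printing Implicit Defensive.
Import Order.TTheory GRing.Theory Num.Theory.
Local Open Scope ring_scope.

(* The value set {-1,0,1} is indexed by 'I_3 : index k stands for the value k - 1. *)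
Definition val3 {R : ringType} (k : 'I_3) : R := (k : nat)%:R - 1.

(* The common law of the X_i: P(X=-1) = pm, P(X=0) = p0, P(X=1) = pp. *)
Definition law3 {R : ringType} (pm p0 pp : R) (k : 'I_3) : R :=
  if (k : nat) == 0%N then pm else if (k : nat) == 1%N then p0 else pp.

Definition mean3 {R : ringType} (p : 'I_3 -> R) : R := \sum_(k < 3) p k * val3 k.

(* Probability of an event about (X_1,...,X_q) when X_1..X_q are i.i.d. with
   law p: the joint law is the product law on outcomes x : 'I_q -> {-1,0,1}. *)
Definition iid_prob {R : ringType} (q : nat) (p : 'I_3 -> R)
  (E : {ffun 'I_q -> 'I_3} -> bool) : R :=
  \sum_(x : {ffun 'I_q -> 'I_3} | E x) \prod_(i < q) p (x i).
Arguments iid_prob {R} q p E.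

From mathcomp Require Import all_boot all_order all_algebra.
From mathcomp Require Import all_classical all_reals.
From mathcomp Require Import sequences exp.
From mathcomp Require Import ring lra.
Import Order.TTheory GRing.Theory Num.Theory.
Local Open Scope ring_scope.

(* Exponential Markov (Chernoff) argument.  With D = sum_i (X_i - mu) and
   l >= 0, the indicator of |D| >= q t is at most
   e^(l (D - q t)) + e^(-l (D + q t)); by independence the expectation of each
   term is e^(-l q t) times the q-th power of the moment generating function of
   a single centred X_i.  Since e^x <= 1 + x + 2 x^2 for |x| <= 1/2, that
   function is at most e^(2 l^2 s) with s = P(X_i <> 0), so choosing
   l = t / (4 s) gives 2 e^(-q t^2 / (8 s)) for t = eps |mu|, which is stronger
   than the claimed bound.  The hypothesis on eps makes t <= s / 4, hence
   |l| <= 1/2. *)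

Lemma mean3_law3 (R : nzRingType) (pm p0 pp : R) : mean3 (law3 pm p0 pp) = pp - pm.
Proof.
rewrite /mean3 !big_ord_recr big_ord0 /= /law3 /val3 /=.
by rewrite sub0r subrr mulr0 addr0 add0r mulrN1 mulr2n addrK mulr1 addrC.
Qed.

Lemma iid_expectation_prod {R : comPzSemiRingType} {T : finType} (q : nat)
  (p g : T -> R) :
  \sum_(x : {ffun 'I_q -> T}) (\prod_(i < q) p (x i)) * \prod_(i < q) g (x i)
  = (\sum_(k : T) p k * g k) ^+ q.
Proof.
rewrite -[in RHS](card_ord q) -prodr_const bigA_distr_bigA /=.
by apply: eq_bigr => x _; rewrite big_split.
Qed.

Section Chernoff.
Variable R : realType.

Lemma expR_le_quad {x : R} :
  `|x| <= 1/2 -> expR x <= 1 + x + 2 * x ^+ 2.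
Proof.
(* e^(-x) >= 1 - x gives (1 - x) e^x <= 1, and (1 - x)(1 + x + 2 x^2) >= 1. *)
rewrite ler_norml => /andP[x_ge x_le].
have ex_gt0 := expR_gt0 x.
have ex_inv : (1 - x) * expR x <= 1.
  have := ler_wpM2r (ltW ex_gt0) (expR_ge1Dx (- x)).
  by rewrite expRN mulVf ?lt0r_neq0.
have cubic : 0 <= x ^+ 2 * (1 - 2 * x) by rewrite mulr_ge0 ?sqr_ge0 //; lra.
have : 1 <= (1 - x) * (1 + x + 2 * x ^+ 2) by nra.
nra.
Qed.

Definition mgf (p g : 'I_3 -> R) (a : R) : R :=
  \sum_(k < 3) p k * expR (a * g k).

Lemma mgf_ge0 (p g : 'I_3 -> R) (a : R) :
  (forall k, 0 <= p k) -> 0 <= mgf p g a.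
Proof. by move=> p_ge0; apply: sumr_ge0 => k _; rewrite mulr_ge0 ?expR_ge0. Qed.

Lemma expR_tails_ge1 (l r d : R) :
  0 <= l -> r <= `|d| -> 1 <= expR (l * d - l * r) + expR (- l * d - l * r).
Proof.
move=> l_ge0 r_le.
have e_pos := expR_gt0 (l * d - l * r); have e_neg := expR_gt0 (- l * d - l * r).
have [d_ge0|d_lt0] := lerP 0 d.
- rewrite ger0_norm // in r_le.
  have : 0 <= l * (d - r) by rewrite mulr_ge0 // subr_ge0.
  have := expR_ge1Dx (l * d - l * r); nra.
- rewrite ltr0_norm // in r_le.
  have : 0 <= l * (- d - r) by rewrite mulr_ge0 // subr_ge0.
  have := expR_ge1Dx (- l * d - l * r); nra.
Qed.

Lemma expR_mul_sumB (q : nat) (g : 'I_q -> R) (a b : R) :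
  expR (a * \sum_(i < q) g i - b) = expR (- b) * \prod_(i < q) expR (a * g i).
Proof. by rewrite expRD mulrC mulr_sumr expR_sum. Qed.

Lemma iid_prob_chernoff (q : nat) (p g : 'I_3 -> R) (l r : R) :
  (forall k, 0 <= p k) -> 0 <= l ->
  iid_prob q p (fun x => r <= `|\sum_(i < q) g (x i)|)
  <= expR (- (l * r)) * (mgf p g l ^+ q + mgf p g (- l) ^+ q).
Proof.
move=> p_ge0 l_ge0.
set w := fun x : {ffun 'I_q -> 'I_3} => \prod_(i < q) p (x i).
set D := fun x : {ffun 'I_q -> 'I_3} => \sum_(i < q) g (x i).
have w_ge0 x : 0 <= w x by apply: prodr_ge0 => i _.
have -> : expR (- (l * r)) * (mgf p g l ^+ q + mgf p g (- l) ^+ q)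
    = \sum_x w x * (expR (l * D x - l * r) + expR (- l * D x - l * r)).
  rewrite /mgf -(iid_expectation_prod q p (fun k => expR (l * g k)))
    -(iid_expectation_prod q p (fun k => expR (- l * g k))) -big_split mulr_sumr.
  by apply: eq_bigr => x _; rewrite !expR_mul_sumB /= -!mulrDr [LHS]mulrCA.
rewrite /iid_prob big_mkcond /=; apply: ler_sum => x _.
case: ifP => [r_le|_]; last by rewrite mulr_ge0 ?addr_ge0 ?expR_ge0.
rewrite -[X in X <= _]mulr1; apply: ler_wpM2l; [exact: w_ge0 | exact: expR_tails_ge1].
Qed.

Lemma mgf_law3_le (pm p0 pp a : R) :
  0 <= pm -> 0 <= pp -> pm + p0 + pp = 1 -> `|a| <= 1/2 ->
  mgf (law3 pm p0 pp) (fun k => val3 k - (pp - pm)) a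
  <= expR (2 * a ^+ 2 * (pp + pm)).
Proof.
move=> pm_ge0 pp_ge0 sum1 a_small.
set c := expR (- (a * (pp - pm))).
have c_gt0 : 0 < c by exact: expR_gt0.
have shift v : expR (a * (v - (pp - pm))) = expR (a * v) * c.
  by rewrite -expRD mulrBr.
have -> : expR (2 * a ^+ 2 * (pp + pm))
          = expR (a * (pp - pm) + 2 * a ^+ 2 * (pp + pm)) * c.
  by rewrite -expRD; congr expR; ring.
rewrite /mgf !big_ord_recr big_ord0 /= /law3 /val3 /= !shift.
have two_sub1 : (2 : R) - 1 = 1 by rewrite mulr2n addrK.
rewrite sub0r subrr two_sub1 mulr0 mulrN1 mulr1 expR0 add0r.
have -> : pm * (expR (- a) * c) + p0 * (1 * c) + pp * (expR a * c)
          = (pm * expR (- a) + p0 + pp * expR a) * c by ring.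
rewrite ler_pM2r //.
have e_pos := expR_le_quad a_small.
have e_neg : expR (- a) <= 1 - a + 2 * a ^+ 2.
  by rewrite -(sqrrN a) expR_le_quad ?normrN.
have := expR_ge1Dx (a * (pp - pm) + 2 * a ^+ 2 * (pp + pm)).
have := ler_wpM2l pm_ge0 e_neg; have := ler_wpM2l pp_ge0 e_pos.
nra.
Qed.

Lemma iid_prob_law3_tail (q : nat) (pm p0 pp t : R) :
  0 <= pm -> 0 <= p0 -> 0 <= pp -> pm + p0 + pp = 1 ->
  0 < t -> t <= 2 * (pp + pm) ->
  iid_prob q (law3 pm p0 pp)
    (fun x => q%:R * t <= `|\sum_(i < q) (val3 (x i) - (pp - pm))|)
  <= 2 * expR (- (q%:R * t ^+ 2) / (8 * (pp + pm))).
Proof.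
move=> pm_ge0 p0_ge0 pp_ge0 sum1 t_gt0 t_le.
set s := pp + pm in t_le *.
have s_gt0 : 0 < s by lra.
set l := t / (4 * s).
have l_ge0 : 0 <= l by rewrite divr_ge0 ?mulr_ge0 ?ltW.
have l_small : `|l| <= 1/2 by rewrite ger0_norm // ler_pdivrMr ?mulr_gt0 //; lra.
have law_ge0 k : 0 <= law3 pm p0 pp k by rewrite /law3; case: ifP => _ //; case: ifP.
set g := fun k => val3 k - (pp - pm).
have mgf_pow_le a : `|a| <= 1/2 ->
    mgf (law3 pm p0 pp) g a ^+ q <= expR (2 * a ^+ 2 * s) ^+ q.
  by move=> a_small; rewrite lerXn2r ?nnegrE ?mgf_ge0 ?expR_ge0 ?mgf_law3_le.
have exponent : - (l * (q%:R * t)) + q%:R * (2 * l ^+ 2 * s)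
                = - (q%:R * t ^+ 2) / (8 * s).
  by rewrite /l; field; rewrite gt_eqF.
apply: le_trans (iid_prob_chernoff q _ g l (q%:R * t) law_ge0 l_ge0) _.
rewrite -exponent expRD expRM_natl [X in _ <= X]mulrCA ler_pM2l ?expR_gt0 //.
have := mgf_pow_le (- l); rewrite normrN sqrrN => /(_ l_small).
have := mgf_pow_le l l_small; lra.
Qed.

Lemma expR_rate8_le_rate12 (u s : R) : 0 <= u -> 0 < s ->
  2 * expR (- u / (8 * s)) <= 4 * expR (- u / (12 * s)).
Proof.
move=> u_ge0 s_gt0.
have v_ge0 : 0 <= u / s by rewrite divr_ge0 // ltW.
have div8 : - u / (8 * s) = - (u / s) / 8 by field; rewrite gt_eqF.
have div12 : - u / (12 * s) = - (u / s) / 12 by field; rewrite gt_eqF.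
have : expR (- u / (8 * s)) <= expR (- u / (12 * s)).
  by rewrite ler_expR div8 div12; lra.
have := expR_gt0 (- u / (8 * s)); lra.
Qed.

End Chernoff.

Lemma ler_norm_normalized_dev (R : realFieldType) (n m S e : R) :
  0 < n -> m != 0 ->
  (e <= `|(n * `|m|)^-1 * S - m / `|m| |) = (n * (e * `|m|) <= `|S - n * m|).
Proof.
move=> n_gt0 m_neq0.
have nm_gt0 : 0 < n * `|m| by rewrite mulr_gt0 ?normr_gt0.
have -> : (n * `|m|)^-1 * S - m / `|m| = (S - n * m) / (n * `|m|).
  by field; rewrite normr_eq0 m_neq0 gt_eqF.
by rewrite normrM normfV (gtr0_norm nm_gt0) ler_pdivlMr // mulrCA.
Qed.

Theorem lemma7 (R : realType) (q : nat) (pm p0 pp eps : R) :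
  (0 < q)%N ->
  0 <= pm -> 0 <= p0 -> 0 <= pp -> pm + p0 + pp = 1 ->
  let p := law3 pm p0 pp in
  let mu := mean3 p in
  mu != 0 ->
  0 < eps -> eps <= Num.min pp pm / (2 * `|mu|) ->
  iid_prob q p
    (fun x => eps <= `| (q%:R * `|mu|)^-1 * (\sum_(i < q) val3 (x i)) - mu / `|mu| |)
  <= 4 * expR (- (q%:R * eps ^+ 2 * `|mu| ^+ 2) / (12 * (pp + pm))).
Proof.
move=> q_gt0 pm_ge0 p0_ge0 pp_ge0 sum1 p mu mu_neq0 eps_gt0 eps_le.
have muE : mu = pp - pm by exact: mean3_law3.
have mu_gt0 : 0 < `|mu| by rewrite normr_gt0.
have t_gt0 : 0 < eps * `|mu| by rewrite mulr_gt0.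
have t_le : eps * `|mu| <= 2 * (pp + pm).
  have : 2 * (eps * `|mu|) <= Num.min pp pm by rewrite mulrCA -ler_pdivlMr ?mulr_gt0.
  have : Num.min pp pm <= pp by rewrite ge_min lexx.
  lra.
have -> : (fun x : {ffun 'I_q -> 'I_3} =>
             eps <= `|(q%:R * `|mu|)^-1 * \sum_(i < q) val3 (x i) - mu / `|mu| |)
    = (fun x => q%:R * (eps * `|mu|) <= `|\sum_(i < q) (val3 (x i) - (pp - pm))|).
  apply: funext => x; rewrite ler_norm_normalized_dev ?ltr0n //.
  by rewrite [in RHS]sumrB sumr_const card_ord -[(pp - pm) *+ q]mulr_natl muE.
apply: le_trans; first exact: iid_prob_law3_tail.
rewrite exprMn mulrA expR_rate8_le_rate12 ?mulr_ge0 ?sqr_ge0 //; lra.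
Qed.
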